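(* The commutative monoid $M$ defined below is residually finite, all its $\mathcal{J}$-classes have finitely many $\mathcal{R}$- and $\mathcal{L}$-classes, but its action on its $\mathcal{R}$-classes (equivalently, since $M$ is commutative, on its $\mathcal{L}$-classes) is not residually finite.
   Context: Let $\tau:\mathbb{Z}\setminus\{0\}\to\mathbb{Z}$, $\tau(2^k(2r+1))=\frac{2}{3}(2^{2\lceil k/2\rceil}-1)$ ($k,r\in\mathbb{Z}$, $k\ge0$). Let $M$ be the commutative monoid with zero $0$ given by generators $a,a^{-1},b_i,c_i$ ($i\in\mathbb{Z}$), $d,e$ and relations $aa^{-1}=a^{-1}a=1$; $b_ic_j=d$ if $i=j$ and $b_ic_j=a^{\tau(j-i)}e$ if $i\neq j$; and $b_ib_j=b_id=b_ie=c_jc_k=c_jd=c_je=dd=de=ee=0$ for all $i,j,k\in\mathbb{Z}$. A monoid is residually finite if distinct elements are separated by homomorphisms to finite monoids. Green's relations: $x\mathcal{R}y$ iff $xM=yM$, $x\mathcal{L}y$ iff $Mx=My$, $x\mathcal{J}y$ iff $MxM=MyM$. The action of $M$ on $M/\mathcal{R}$ ($m\cdot R_x=R_{mx}$) is residually finite if any two distinct classes are separated by an action homomorphism to an action on a finite set, equivalently for all $(s,t)\notin\mathcal{R}$ there is a finite-index (left) congruence containing $\mathcal{R}$ but not $(s,t)$. *)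

From Stdlib Require Import ZArith.
From mathcomp Require Import all_boot.
Set Implicit Arguments. Unset Strict Implicit. Unset Printing Implicit Defensive.

Definition v2 (z : Z) : nat := logn 2 (Z.abs_nat z).

(* tau(2^k(2r+1)) = 2/3 (2^(2 ceil(k/2)) - 1);  ceil(k/2) = (k+1)/2. *)
Definition tau (z : Z) : Z :=
  ((2 * (2 ^ (2 * Z.of_nat ((v2 z + 1) %/ 2)) - 1)) / 3)%Z.

Inductive gen : Type :=
| Ga | Gai
| Gb of Z | Gc of Z
| Gd | Ge.

Inductive mterm : Type :=
| T1 : mterm
| T0 : mterm
| Tg : gen -> mterm
| Tm : mterm -> mterm -> mterm.

Definition apow (z : Z) : mterm :=
  if (0 <=? z)%Z then iter (Z.to_nat z) (Tm (Tg Ga)) T1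
  else iter (Z.to_nat (- z)) (Tm (Tg Gai)) T1.

Inductive Mrel : mterm -> mterm -> Prop :=
| rel_aai : Mrel (Tm (Tg Ga) (Tg Gai)) T1
| rel_aia : Mrel (Tm (Tg Gai) (Tg Ga)) T1
| rel_bc_eq i : Mrel (Tm (Tg (Gb i)) (Tg (Gc i))) (Tg Gd)
| rel_bc_neq i j : i <> j ->
    Mrel (Tm (Tg (Gb i)) (Tg (Gc j))) (Tm (apow (tau (j - i))) (Tg Ge))
| rel_bb i j : Mrel (Tm (Tg (Gb i)) (Tg (Gb j))) T0
| rel_bd i : Mrel (Tm (Tg (Gb i)) (Tg Gd)) T0
| rel_be i : Mrel (Tm (Tg (Gb i)) (Tg Ge)) T0
| rel_cc j k : Mrel (Tm (Tg (Gc j)) (Tg (Gc k))) T0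
| rel_cd j : Mrel (Tm (Tg (Gc j)) (Tg Gd)) T0
| rel_ce j : Mrel (Tm (Tg (Gc j)) (Tg Ge)) T0
| rel_dd : Mrel (Tm (Tg Gd) (Tg Gd)) T0
| rel_de : Mrel (Tm (Tg Gd) (Tg Ge)) T0
| rel_ee : Mrel (Tm (Tg Ge) (Tg Ge)) T0.

(* The congruence of the presentation: the least congruence on terms making
   Tm associative and commutative with identity T1 and zero T0, and
   containing Mrel.  M is the quotient  mterm / meq. *)
Inductive meq : mterm -> mterm -> Prop :=
| meq_refl t : meq t t
| meq_sym s t : meq s t -> meq t s
| meq_trans s t u : meq s t -> meq t u -> meq s u
| meq_mul s s' t t' : meq s s' -> meq t t' -> meq (Tm s t) (Tm s' t')
| meq_assoc s t u : meq (Tm (Tm s t) u) (Tm s (Tm t u))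
| meq_comm s t : meq (Tm s t) (Tm t s)
| meq_id_l t : meq (Tm T1 t) t
| meq_id_r t : meq (Tm t T1) t
| meq_zero_l t : meq (Tm T0 t) T0
| meq_zero_r t : meq (Tm t T0) T0
| meq_rel s t : Mrel s t -> meq s t.

Definition is_hom (N : Type) (op : N -> N -> N) (e : N) (f : mterm -> N) :=
  [/\ forall s t, meq s t -> f s = f t,
      f T1 = e &
      forall s t, f (Tm s t) = op (f s) (f t)].

Definition is_monoid (N : Type) (op : N -> N -> N) (e : N) :=
  [/\ associative op, left_id e op & right_id e op].

Definition M_residually_finite : Prop :=
  forall s t : mterm, ~ meq s t ->
    exists (N : finType) (op : N -> N -> N) (e : N) (f : mterm -> N),
      [/\ is_monoid op e, is_hom op e f & f s <> f t].

(* Green's relations, literally xM = yM, Mx = My, MxM = MyM *)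
Definition GreenR (x y : mterm) : Prop :=
  forall z, (exists u, meq z (Tm x u)) <-> (exists u, meq z (Tm y u)).
Definition GreenL (x y : mterm) : Prop :=
  forall z, (exists u, meq z (Tm u x)) <-> (exists u, meq z (Tm u y)).
Definition GreenJ (x y : mterm) : Prop :=
  forall z, (exists u v, meq z (Tm (Tm u x) v)) <->
            (exists u v, meq z (Tm (Tm u y) v)).

Definition finitely_many_classes_in_J (Rel : mterm -> mterm -> Prop) (x : mterm) :=
  exists ys : seq mterm, forall z, GreenJ z x -> exists2 y, List.In y ys & Rel z y.

(* M acts on M/R by m . R_x = R_{mx}.  An action of M on a finite set X,
   and an equivariant map M/R -> X (represented on representatives). *)
Definition is_action (X : Type) (act : mterm -> X -> X) :=
  [/\ forall m n, meq m n -> forall x, act m x = act n x,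
      forall x, act T1 x = x &
      forall m n x, act (Tm m n) x = act m (act n x)].

Definition is_Rclass_action_hom (X : Type) (act : mterm -> X -> X)
    (phi : mterm -> X) :=
  (forall s t, GreenR s t -> phi s = phi t) /\
  (forall m s, phi (Tm m s) = act m (phi s)).

Definition Raction_residually_finite : Prop :=
  forall s t : mterm, ~ GreenR s t ->
    exists (X : finType) (act : mterm -> X -> X) (phi : mterm -> X),
      [/\ is_action act, is_Rclass_action_hom act phi & phi s <> phi t].

(* Every element of M is 0 or a^k x with x in {1, b_i, c_j, d, e}, and these
   normal forms are pairwise distinct, so M is the concrete monoid [nform].
   Since M is commutative, xM = MxM: each J-class is a single R-class (and a
   single L-class).
   For residual finiteness, reduce the exponent of a and the indices modulo 4^L
   and identify d with a^(taul L) e, where taul L = 2 (4^L - 1) / 3.  This is a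
   congruence because tau z mod 4^L only depends on z mod 4^L, provided tau is
   read as taul L at multiples of 4^L; and for L large it separates any two
   given normal forms.
   The action on M/R is not residually finite: an equivariant map phi from M/R
   to a finite set identifies some c_i, c_j with i <> j, and then
   phi d = phi (b_i c_i) = phi (b_i c_j) = phi (a^tau(j-i) e) = phi e, although
   d and e are not R-related. *)

From Stdlib Require Import ZArith Lia Setoid Morphisms.
From mathcomp Require Import all_boot.

(** * Normal forms *)

(* [NU k], [NB k i], [NC k j], [ND k], [NE k] stand for a^k, a^k b_i, a^k c_j,
   a^k d, a^k e, and [N0] for 0. *)
Inductive nform : Type :=
  NU of Z | NB of Z & Z | NC of Z & Z | ND of Z | NE of Z | N0.

Definition nbc (k i j : Z) : nform :=
  if Z.eqb i j then ND k else NE (k + tau (j - i)).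

Definition nmul (x y : nform) : nform :=
  match x, y with
  | N0, _ | _, N0 => N0
  | NU k, NU l => NU (k + l)
  | NU k, NB l i | NB l i, NU k => NB (k + l) i
  | NU k, NC l j | NC l j, NU k => NC (k + l) j
  | NU k, ND l | ND l, NU k => ND (k + l)
  | NU k, NE l | NE l, NU k => NE (k + l)
  | NB k i, NC l j | NC l j, NB k i => nbc (k + l) i j
  | _, _ => N0
  end%Z.

Lemma nmulC : commutative nmul.
Proof.
by case=> [k|k i|k i|k|k|] [l|l j|l j|l|l|] //=; rewrite Z.add_comm.
Qed.

Arguments nbc : simpl never.

Lemma nmulA : associative nmul.
Proof.
case=> [k|k i|k i|k|k|] [l|l j|l j|l|l|] [m|m h|m h|m|m|]; cbn [nmul];
  unfold nbc; repeat match goal with |- context[Z.eqb ?a ?b] => case: (Z.eqb a b) end;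
  cbn [nmul]; try reflexivity; f_equal; ring.
Qed.

Lemma nmul1n : left_id (NU 0) nmul.
Proof. by case. Qed.

Lemma nmuln1 : right_id (NU 0) nmul.
Proof. by move=> x; rewrite nmulC nmul1n. Qed.

Fixpoint nf (t : mterm) : nform :=
  match t with
  | T1 => NU 0
  | T0 => N0
  | Tg Ga => NU 1
  | Tg Gai => NU (-1)
  | Tg (Gb i) => NB 0 i
  | Tg (Gc j) => NC 0 j
  | Tg Gd => ND 0
  | Tg Ge => NE 0
  | Tm s u => nmul (nf s) (nf u)
  end.

Definition tpow (t : mterm) (n : nat) : mterm := iter n (Tm t) T1.

Lemma apow_of_nat n : apow (Z.of_nat n) = tpow (Tg Ga) n.
Proof. by rewrite /apow Nat2Z.id; case: n. Qed.

Lemma apow_opp_nat n : apow (- Z.of_nat n) = tpow (Tg Gai) n.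
Proof.
case: n => [//|n]; rewrite /apow Z.opp_involutive Nat2Z.id.
by have /Z.leb_gt -> : (- Z.of_nat n.+1 < 0)%Z by lia.
Qed.

Lemma nf_tpow t z n : nf t = NU z -> nf (tpow t n) = NU (Z.of_nat n * z).
Proof.
move=> nft; elim: n => [//|n IH].
have -> : nf (tpow t n.+1) = nmul (nf t) (nf (tpow t n)) by [].
by rewrite nft IH Nat2Z.inj_succ /=; f_equal; lia.
Qed.

Lemma nf_apow z : nf (apow z) = NU z.
Proof.
have [z_ge0 | z_lt0] := Z_le_gt_dec 0 z.
- by rewrite -(Z2Nat.id z z_ge0) apow_of_nat (@nf_tpow (Tg Ga) 1 _ erefl) Z.mul_1_r.
- have -> : z = (- Z.of_nat (Z.to_nat (- z)))%Z by lia.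
  by rewrite apow_opp_nat (@nf_tpow (Tg Gai) (-1) _ erefl); f_equal; lia.
Qed.

Lemma nf_meq s t : meq s t -> nf s = nf t.
Proof.
elim=> {s t} //.
- by move=> ? ? ? _ -> _ ->.
- by move=> ? ? ? ? _ /= -> _ ->.
- by move=> * /=; rewrite nmulA.
- by move=> * /=; rewrite nmulC.
- by move=> t; apply: (nmul1n (nf t)).
- by move=> t; apply: (nmuln1 (nf t)).
- by move=> t; apply: (nmulC (nf t) N0).
- move=> ? ? [] //= i.
  + by rewrite /nbc Z.eqb_refl.
  + move=> j /Z.eqb_neq neq_ij; rewrite nf_apow /= /nbc neq_ij.
    by f_equal; ring.
Qed.

Add Relation mterm meq
  reflexivity proved by meq_refl
  symmetry proved by meq_sym
  transitivity proved by meq_trans as meq_setoid.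

#[local] Hint Resolve meq_refl : core.

Add Morphism Tm with signature meq ==> meq ==> meq as Tm_morph.
Proof. by move=> *; apply: meq_mul. Qed.

Lemma meq_mulACA x y z w : meq (Tm (Tm x y) (Tm z w)) (Tm (Tm x z) (Tm y w)).
Proof.
rewrite meq_assoc -(meq_assoc y z w) (meq_comm y z) (meq_assoc z y w) -meq_assoc.
reflexivity.
Qed.

Lemma tpow_add t n m : meq (tpow t (n + m)) (Tm (tpow t n) (tpow t m)).
Proof.
elim: n => [|n IH]; first by rewrite /= meq_id_l.
by rewrite addSn /= IH meq_assoc.
Qed.

Lemma tpow_inv n : meq (Tm (tpow (Tg Ga) n) (tpow (Tg Gai) n)) T1.
Proof.
elim: n => [|n IH]; first exact: meq_id_l.
by rewrite /= meq_mulACA IH (meq_rel rel_aai) meq_id_l.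
Qed.

Lemma tpow_sub n m :
  meq (Tm (tpow (Tg Ga) n) (tpow (Tg Gai) m)) (apow (Z.of_nat n - Z.of_nat m)).
Proof.
have [le_mn | lt_nm] := leqP m n.
- rewrite -(subnK le_mn) tpow_add meq_assoc tpow_inv meq_id_r Nat2Z.inj_add.
  by rewrite Z.add_simpl_r apow_of_nat.
- rewrite -(subnK (ltnW lt_nm)) tpow_add (meq_comm (tpow (Tg Gai) _)) -meq_assoc tpow_inv.
  rewrite meq_id_l Nat2Z.inj_add.
  have -> : (Z.of_nat n - (Z.of_nat (m - n) + Z.of_nat n) = - Z.of_nat (m - n))%Z by lia.
  by rewrite apow_opp_nat.
Qed.

Lemma apow_add k l : meq (Tm (apow k) (apow l)) (apow (k + l)).
Proof.
have apow_split z :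
    meq (apow z) (Tm (tpow (Tg Ga) (Z.to_nat z)) (tpow (Tg Gai) (Z.to_nat (- z)))).
  by rewrite tpow_sub (_ : Z.of_nat _ - Z.of_nat _ = z)%Z //; lia.
rewrite !apow_split meq_mulACA -!tpow_add tpow_sub !Nat2Z.inj_add.
by rewrite (_ : _ - _ = k + l)%Z //; lia.
Qed.

Definition reify (x : nform) : mterm :=
  match x with
  | NU k => apow k
  | NB k i => Tm (apow k) (Tg (Gb i))
  | NC k j => Tm (apow k) (Tg (Gc j))
  | ND k => Tm (apow k) (Tg Gd)
  | NE k => Tm (apow k) (Tg Ge)
  | N0 => T0
  end.

Lemma reify_nbc k i j :
  meq (Tm (apow k) (Tm (Tg (Gb i)) (Tg (Gc j)))) (reify (nbc k i j)).
Proof.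
rewrite /nbc; case: Z.eqb_spec => [<- | neq_ij] /=.
- by rewrite (meq_rel (rel_bc_eq i)).
- by rewrite (meq_rel (rel_bc_neq neq_ij)) -meq_assoc apow_add.
Qed.

Lemma reify_nmul x y : meq (Tm (reify x) (reify y)) (reify (nmul x y)).
Proof.
have shift k l g h : meq (Tm (Tm (apow k) g) (Tm (apow l) h)) (Tm (apow (k + l)) (Tm g h)).
  by rewrite meq_mulACA apow_add.
have zero k g h : Mrel (Tm g h) T0 \/ Mrel (Tm h g) T0 -> meq (Tm (apow k) (Tm g h)) T0.
  case=> [gh0 | hg0]; first by rewrite (meq_rel gh0) meq_zero_r.
  by rewrite (meq_comm g h) (meq_rel hg0) meq_zero_r.
case: x => [k|k i|k i|k|k|]; case: y => [l|l j|l j|l|l|]; cbn [reify nmul];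
  rewrite ?meq_zero_l ?meq_zero_r //; try exact: apow_add.
all: try by rewrite -meq_assoc apow_add.
all: try by rewrite meq_assoc (meq_comm _ (apow _)) -meq_assoc apow_add Z.add_comm.
all: rewrite shift; try by apply: zero; first [left; constructor | right; constructor].
- exact: reify_nbc.
- by rewrite (meq_comm (Tg (Gc _))) Z.add_comm reify_nbc.
Qed.

Lemma reify_nf t : meq t (reify (nf t)).
Proof.
elim: t => [| | g | s IHs t IHt] /=; try reflexivity.
- by case: g => *; apply: meq_sym; [exact: meq_id_r | exact: meq_id_r | exact: meq_id_l ..].
- by rewrite -reify_nmul -IHs -IHt.
Qed.

Lemma meq_nfP s t : meq s t <-> nf s = nf t.
Proof.
split=> [|nf_st]; first exact: nf_meq.
by rewrite (reify_nf s) (reify_nf t) nf_st.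
Qed.

(** * Green's relations and the action on R-classes *)

Lemma principal_right_idealE w y :
  (exists u, meq w (Tm y u)) <-> (exists u v, meq w (Tm (Tm u y) v)).
Proof.
split=> [[u wyu] | [u [v wuyv]]].
- by exists T1, u; rewrite wyu meq_id_l.
- by exists (Tm u v); rewrite wuyv (meq_comm u y) meq_assoc.
Qed.

Lemma principal_left_idealE w y :
  (exists u, meq w (Tm u y)) <-> (exists u v, meq w (Tm (Tm u y) v)).
Proof.
split=> [[u wuy] | [u [v wuyv]]].
- by exists u, T1; rewrite wuy meq_id_r.
- by exists (Tm u v); rewrite wuyv meq_assoc (meq_comm y v) -meq_assoc.
Qed.

Lemma GreenJ_GreenR x y : GreenJ x y -> GreenR x y.
Proof. by move=> xJy z; rewrite !principal_right_idealE. Qed.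

Lemma GreenJ_GreenL x y : GreenJ x y -> GreenL x y.
Proof. by move=> xJy z; rewrite !principal_left_idealE. Qed.

Lemma meq_GreenR s t : meq s t -> GreenR s t.
Proof. by move=> st z; split=> -[u zu]; exists u; rewrite zu st. Qed.

Lemma GreenR_apow_l k t : GreenR (Tm (apow k) t) t.
Proof.
have shift l u : meq (Tm (Tm (apow l) t) u) (Tm t (Tm (apow l) u)).
  by rewrite (meq_comm (apow l)) !meq_assoc.
move=> z; split=> -[u zu].
- by exists (Tm (apow k) u); rewrite zu shift.
- exists (Tm (apow (- k)) u).
  by rewrite zu shift -(meq_assoc (apow k)) apow_add Z.add_opp_diag_r meq_id_l.
Qed.

Lemma not_GreenR_d_e : ~ GreenR (Tg Gd) (Tg Ge).
Proof.
move=> /(_ (Tg Gd)) [/(_ (ex_intro _ T1 (meq_sym (meq_id_r _)))) [u]].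
by move/meq_nfP => /=; case: (nf u).
Qed.

Lemma Rclass_hom_identifies_d_e {X : finType} {act : mterm -> X -> X} {phi : mterm -> X} :
  is_Rclass_action_hom act phi -> phi (Tg Gd) = phi (Tg Ge).
Proof.
move=> [phiR phi_act].
pose phic (i : 'I_#|X|.+1) := phi (Tg (Gc (Z.of_nat i))).
have /injectivePn [i [j neq_ij phic_ij]] : ~~ injectiveb phic.
  by apply/injectiveP => /leq_card; rewrite card_ord ltnn.
have neq_ijZ : Z.of_nat i <> Z.of_nat j by move/Nat2Z.inj/val_inj/eqP; exact/negP.
rewrite (phiR _ _ (meq_GreenR _ _ (meq_sym (meq_rel (rel_bc_eq (Z.of_nat i)))))).
rewrite phi_act [phi _]phic_ij -phi_act.
rewrite (phiR _ _ (meq_GreenR _ _ (meq_rel (rel_bc_neq neq_ijZ)))).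
exact: phiR (GreenR_apow_l _ _).
Qed.

(** * tau modulo powers of 4 *)

Definition pw4 (L : nat) : Z := 2 ^ (2 * Z.of_nat L).
Arguments pw4 : simpl never.

Lemma pw4E L : pw4 L = (2 ^ Z.of_nat (2 * L))%Z.
Proof. by rewrite /pw4 -multE Nat2Z.inj_mul. Qed.

Lemma pw4_gt0 L : (0 < pw4 L)%Z.
Proof. by apply: Z.pow_pos_nonneg; lia. Qed.

Lemma pw4S L : pw4 L.+1 = (4 * pw4 L)%Z.
Proof. by rewrite /pw4 Nat2Z.inj_succ Z.mul_succ_r Z.pow_add_r; lia. Qed.

Fixpoint taul (L : nat) : Z := if L is L'.+1 then 4 * taul L' + 2 else 0.

Lemma taul_closed L : (3 * taul L = 2 * (pw4 L - 1))%Z.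
Proof. by elim: L => [|L IH]; [rewrite /pw4 | rewrite pw4S; cbn [taul]; lia]. Qed.

Lemma tau_taul z : tau z = taul ((v2 z + 1) %/ 2).
Proof. by rewrite /tau -/(pw4 _) -taul_closed Z.mul_comm Z.div_mul. Qed.

Lemma taul_add L n : taul (L + n) = (pw4 L * taul n + taul L)%Z.
Proof.
elim: L => [|L IH]; first by rewrite add0n (_ : pw4 0 = 1%Z) // Z.mul_1_l Z.add_0_r.
by rewrite addSn; cbn [taul]; rewrite IH pw4S; lia.
Qed.

Lemma taul_mod L L' : L <= L' -> (taul L' mod pw4 L = taul L mod pw4 L)%Z.
Proof.
by move=> le_LL'; rewrite -(subnKC le_LL') taul_add Z.add_comm Z.mul_comm Z_mod_plus_full.
Qed.

Lemma Nat2Z_expn m k : Z.of_nat (m ^ k) = (Z.of_nat m ^ Z.of_nat k)%Z.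
Proof.
elim: k => [//|k IH].
by rewrite expnS -multE Nat2Z.inj_mul IH Nat2Z.inj_succ Z.pow_succ_r //; lia.
Qed.

Lemma Zof_nat_dvdP (d : nat) (z : Z) : (Z.of_nat d | z)%Z <-> d %| Z.abs_nat z.
Proof.
rewrite -Z.divide_abs_r -Nat2Z.inj_abs_nat; move: (Z.abs_nat z) => m.
split=> [[c mE] | /dvdnP [k ->]].
- apply/dvdnP; case: d mE => [|d] mE; first by exists 0; rewrite muln0; lia.
  exists (Z.to_nat c); apply: Nat2Z.inj.
  by rewrite -multE Nat2Z.inj_mul Z2Nat.id //; nia.
- by exists (Z.of_nat k); rewrite -multE Nat2Z.inj_mul.
Qed.

Lemma pow2_dvd_v2 k z : z <> 0%Z -> (2 ^ Z.of_nat k | z)%Z <-> k <= v2 z.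
Proof.
move=> z_neq0; rewrite -[2%Z]/(Z.of_nat 2) -Nat2Z_expn Zof_nat_dvdP /v2 pfactor_dvdn //.
by apply/ltP; lia.
Qed.

Lemma v2_add_pow2_mul n z q :
  z <> 0%Z -> v2 z < n -> v2 (z + 2 ^ Z.of_nat n * q) = v2 z.
Proof.
move=> z_neq0 lt_zn.
have dvd_n k : k <= n -> (2 ^ Z.of_nat k | 2 ^ Z.of_nat n * q)%Z.
  move=> le_kn; apply: Z.divide_mul_l.
  rewrite -(subnK le_kn) -plusE Nat2Z.inj_add Z.pow_add_r; try lia.
  exact: Z.divide_factor_r.
have w_neq0 : (z + 2 ^ Z.of_nat n * q <> 0)%Z.
  move=> w0; move: lt_zn; rewrite ltnNge => /negP; apply.
  apply/(pow2_dvd_v2 _ _ z_neq0); rewrite (_ : z = - (2 ^ Z.of_nat n * q))%Z; last lia.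
  by apply/Z.divide_opp_r/dvd_n.
apply/eqP; rewrite eqn_leq; apply/andP; split.
- rewrite leqNgt; apply/negP => lt_v2.
  have /(pow2_dvd_v2 _ _ z_neq0) : (2 ^ Z.of_nat (v2 z).+1 | z)%Z.
    apply: (Z.divide_add_cancel_r _ (2 ^ Z.of_nat n * q)); first exact: dvd_n.
    by rewrite Z.add_comm; apply/(pow2_dvd_v2 _ _ w_neq0).
  by rewrite ltnn.
- apply/(pow2_dvd_v2 _ _ w_neq0); apply: Z.divide_add_r; first exact/(pow2_dvd_v2 _ _ z_neq0).
  exact/dvd_n/ltnW.
Qed.

Lemma v2_mod_pw4 L z : (z mod pw4 L <> 0)%Z -> v2 (z mod pw4 L) = v2 z.
Proof.
move=> r_neq0; have P_gt0 := pw4_gt0 L.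
have lt_r : v2 (z mod pw4 L) < 2 * L.
  rewrite ltnNge; apply/negP => /(pow2_dvd_v2 _ _ r_neq0); rewrite -pw4E => dvd_r.
  have := Z.mod_pos_bound z _ P_gt0; have := Z.divide_pos_le _ _ _ dvd_r; lia.
have zE : z = (z mod pw4 L + 2 ^ Z.of_nat (2 * L) * (z / pw4 L))%Z.
  by rewrite -pw4E Z.add_comm; exact: Z_div_mod_eq_full.
by rewrite {2}zE v2_add_pow2_mul.
Qed.

Lemma v2_ge_of_mod_pw4 L z : z <> 0%Z -> (z mod pw4 L = 0)%Z -> 2 * L <= v2 z.
Proof.
move=> z_neq0 /Z.mod_divide dvd_z; apply/(pow2_dvd_v2 _ _ z_neq0).
by rewrite -pw4E; apply: dvd_z; have := pw4_gt0 L; lia.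
Qed.

(* Modulo 4^L, [taul L] plays the role of tau at multiples of 4^L. *)
Definition taum (L : nat) (z : Z) : Z := if Z.eqb z 0 then taul L else tau z.

Lemma taum_mod L z : (taum L z mod pw4 L = taum L (z mod pw4 L) mod pw4 L)%Z.
Proof.
rewrite /taum; case: Z.eqb_spec => [-> | z_neq0]; first by rewrite Zmod_0_l.
case: Z.eqb_spec => [r0 | r_neq0]; last by rewrite !tau_taul v2_mod_pw4.
rewrite tau_taul taul_mod // leq_divRL // mulnC.
exact: leq_trans (v2_ge_of_mod_pw4 _ _ z_neq0 r0) (leq_addr _ _).
Qed.

(** * Finite quotients *)

(* Modulo 4^L, d = b_i c_i behaves like b_i c_(i + 4^L) = a^(taul L) e. *)
Definition red (L : nat) (x : nform) : nform :=
  match x with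
  | NU k => NU (k mod pw4 L)
  | NB k i => NB (k mod pw4 L) (i mod pw4 L)
  | NC k j => NC (k mod pw4 L) (j mod pw4 L)
  | ND k => NE ((k + taul L) mod pw4 L)
  | NE k => NE (k mod pw4 L)
  | N0 => N0
  end%Z.

Lemma red_nbc L k i j : red L (nbc k i j) = NE ((k + taum L (j - i)) mod pw4 L)%Z.
Proof.
rewrite /nbc /taum; case: Z.eqb_spec => [<- | neq_ij] /=; first by rewrite Z.sub_diag.
by have /Z.eqb_neq -> : (j - i <> 0)%Z by lia.
Qed.

Lemma red_nmul L x y : red L (nmul x y) = red L (nmul (red L x) y).
Proof.
have addm a a' b b' : (a mod pw4 L = a' mod pw4 L)%Z -> (b mod pw4 L = b' mod pw4 L)%Z ->
    ((a + b) mod pw4 L = (a' + b') mod pw4 L)%Z.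
  by move=> aa' bb'; rewrite Zplus_mod aa' bb' -Zplus_mod.
have taum_congr b c : (b mod pw4 L = c mod pw4 L)%Z ->
    (taum L b mod pw4 L = taum L c mod pw4 L)%Z.
  by move=> bc; rewrite taum_mod bc -taum_mod.
case: x => [k|k i|k i|k|k|]; case: y => [l|l j|l j|l|l|]; cbn [nmul red];
  rewrite ?red_nbc; cbn [red]; try reflexivity; f_equal.
all: rewrite ?Zmod_mod ?Zplus_mod_idemp_r ?Zplus_mod_idemp_l ?Z.add_assoc //.
all: apply: (addm); [apply: (addm); by rewrite ?Zmod_mod | try apply: (taum_congr)] => //.
- by rewrite Zminus_mod_idemp_r.
- by rewrite Zminus_mod_idemp_l.
Qed.

Lemma mod_inj_small n a b : (Z.abs a + Z.abs b < n)%Z -> (a mod n = b mod n)%Z -> a = b.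
Proof.
move=> small /Z.cong_iff_ex [c abE].
have [c0 | [c_gt0 | c_lt0]] : (c = 0 \/ 0 < c \/ c < 0)%Z by lia.
all: nia.
Qed.

Lemma taul_mod_neq L k l : (3 * Z.abs k + 3 * Z.abs l + 2 < pw4 L)%Z ->
  ((k + taul L) mod pw4 L <> l mod pw4 L)%Z.
Proof.
move=> small kl; have P_gt0 := pw4_gt0 L.
have : ((3 * k - 2) mod pw4 L = (3 * l) mod pw4 L)%Z.
  rewrite (_ : 3 * k - 2 = 3 * (k + taul L) + (-2) * pw4 L)%Z; last by rewrite
    Z.mul_add_distr_l taul_closed; ring.
  by rewrite Z_mod_plus_full Zmult_mod kl -Zmult_mod.
by move/mod_inj_small; lia.
Qed.

Definition nsize (x : nform) : Z :=
  match x with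
  | NU k | ND k | NE k => Z.abs k
  | NB k i | NC k i => Z.abs k + Z.abs i
  | N0 => 0
  end%Z.

Lemma red_separates x y : x <> y -> exists L, red L x <> red L y.
Proof.
move=> neq_xy; pose L := Z.to_nat (3 * (nsize x + nsize y) + 2).
have nsize_ge0 z : (0 <= nsize z)%Z by case: z => * /=; lia.
have large : (3 * (nsize x + nsize y) + 2 < pw4 L)%Z.
  have := Z.pow_gt_lin_r 2 (2 * Z.of_nat L); rewrite -/(pw4 L) /L.
  have := nsize_ge0 x; have := nsize_ge0 y; lia.
exists L; move: large; clearbody L => large red_xy; apply: neq_xy.
case: x red_xy large => [k|k i|k i|k|k|]; case: y => [l|l j|l j|l|l|];
  cbn [red nsize] => red_xy large; try discriminate; try reflexivity; case: red_xy.
all: try by move=> *; f_equal; apply: (mod_inj_small (pw4 L)) => //; lia.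
- move=> /Z.cong_iff_ex [c klE]; f_equal; apply: (mod_inj_small (pw4 L)); first lia.
  by apply/Z.cong_iff_ex; exists c; lia.
- by move=> kl; exfalso; apply: (taul_mod_neq L k l) kl; lia.
- by move=> kl; exfalso; apply: (taul_mod_neq L l k) (esym kl); lia.
Qed.

Section TransportAlongCongruence.

Context {N : Type} {enc : nform -> N} {dec : N -> nform}.
Hypothesis decK : cancel dec enc.
Hypothesis enc_congr :
  forall x x' y, enc x = enc x' -> enc (nmul x y) = enc (nmul x' y).

Definition qmul (p q : N) : N := enc (nmul (dec p) (dec q)).

Lemma enc_nmul x y : enc (nmul x y) = qmul (enc x) (enc y).
Proof.
rewrite /qmul (enc_congr _ _ y (esym (decK (enc x)))) nmulC.
by rewrite (enc_congr _ _ _ (esym (decK (enc y)))) nmulC.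
Qed.

Lemma qmul_monoid : is_monoid qmul (enc (NU 0)).
Proof.
split=> [p q r | p | p].
- by rewrite -(decK p) -(decK q) -(decK r) -!enc_nmul nmulA.
- by rewrite -(decK p) -enc_nmul nmul1n.
- by rewrite -(decK p) -enc_nmul nmuln1.
Qed.

Lemma enc_nf_hom : is_hom qmul (enc (NU 0)) (fun t => enc (nf t)).
Proof. by split=> // [s t /nf_meq -> // | s t]; rewrite /= enc_nmul. Qed.

End TransportAlongCongruence.

(* Written [n.-1.+1] so that [inord] applies; [residue_card] removes the detour. *)
Definition residue (L : nat) := 'I_(Z.to_nat (pw4 L)).-1.+1.

Definition to_residue L (z : Z) : residue L := inord (Z.to_nat (z mod pw4 L)).

Definition of_residue {L} (o : residue L) : Z := Z.of_nat o.

Lemma residue_card L : (Z.to_nat (pw4 L)).-1.+1 = Z.to_nat (pw4 L).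
Proof. by have := pw4_gt0 L; lia. Qed.

Lemma to_residueK L z : of_residue (to_residue L z) = (z mod pw4 L)%Z.
Proof.
have bound := Z.mod_pos_bound z _ (pw4_gt0 L).
rewrite /of_residue /to_residue inordK; first by rewrite Z2Nat.id; lia.
by rewrite residue_card; apply/ltP; lia.
Qed.

Lemma of_residueK L : cancel (@of_residue L) (to_residue L).
Proof.
move=> o; have /ltP o_lt := ltn_ord o; have card := residue_card L.
rewrite /of_residue /to_residue Z.mod_small; last lia.
by rewrite Nat2Z.id inord_val.
Qed.

Lemma to_residue_mod L z : to_residue L (z mod pw4 L) = to_residue L z.
Proof. by rewrite /to_residue Zmod_mod. Qed.

Definition qform (L : nat) : finType :=
  option (((residue L + residue L * residue L) + residue L * residue L) + residue L).

Definition to_qform (L : nat) (x : nform) : qform L :=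
  match x with
  | NU k => Some (inl (inl (inl (to_residue L k))))
  | NB k i => Some (inl (inl (inr (to_residue L k, to_residue L i))))
  | NC k j => Some (inl (inr (to_residue L k, to_residue L j)))
  | ND k => Some (inr (to_residue L (k + taul L)))
  | NE k => Some (inr (to_residue L k))
  | N0 => None
  end.

Definition of_qform {L : nat} (p : qform L) : nform :=
  match p with
  | None => N0
  | Some (inl (inl (inl o))) => NU (of_residue o)
  | Some (inl (inl (inr (o, o')))) => NB (of_residue o) (of_residue o')
  | Some (inl (inr (o, o'))) => NC (of_residue o) (of_residue o')
  | Some (inr o) => NE (of_residue o)
  end.

Lemma of_to_qform L x : of_qform (to_qform L x) = red L x.
Proof. by case: x => * /=; rewrite ?to_residueK. Qed.

Lemma of_qformK L : cancel (@of_qform L) (to_qform L).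
Proof. by case=> [[[[o|[o o']]|[o o']]|o]|] //=; rewrite ?of_residueK. Qed.

Lemma to_qform_red L x : to_qform L (red L x) = to_qform L x.
Proof. by case: x => * /=; rewrite ?to_residue_mod. Qed.

Lemma to_qform_congr L x x' y :
  to_qform L x = to_qform L x' -> to_qform L (nmul x y) = to_qform L (nmul x' y).
Proof.
move=> /(congr1 (@of_qform L)); rewrite !of_to_qform => red_xx'.
by rewrite -to_qform_red red_nmul red_xx' -red_nmul to_qform_red.
Qed.

Lemma M_is_residually_finite : M_residually_finite.
Proof.
move=> s t /meq_nfP /red_separates [L red_st].
have [decK congr] := (@of_qformK L, @to_qform_congr L).
exists (qform L), (@qmul _ (to_qform L) of_qform), (to_qform L (NU 0)).
exists (fun u => to_qform L (nf u)).
split; [exact: qmul_monoid decK congr | exact: enc_nf_hom decK congr |].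
by move/(congr1 of_qform); rewrite !of_to_qform.
Qed.

Lemma finitely_many_R_and_L_classes_in_J x :
  finitely_many_classes_in_J GreenR x /\ finitely_many_classes_in_J GreenL x.
Proof.
split; exists [:: x] => z zJx; exists x;
  first [by left | exact: GreenJ_GreenR | exact: GreenJ_GreenL].
Qed.

Lemma Raction_not_residually_finite : ~ Raction_residually_finite.
Proof.
move=> /(_ _ _ not_GreenR_d_e) [X [act [phi [_ phi_hom]]]]; apply.
exact: Rclass_hom_identifies_d_e phi_hom.
Qed.

Theorem mainTheorem18 :
  [/\ M_residually_finite,
      (forall x : mterm, finitely_many_classes_in_J GreenR x /\
                         finitely_many_classes_in_J GreenL x) &
      ~ Raction_residually_finite].
Proof.
split; [exact: M_is_residually_finite | exact: finitely_many_R_and_L_classes_in_J |].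
exact: Raction_not_residually_finite.
Qed.
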